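(* Let $k\ge1$ and let $M^*$ be constructed from quadrature rules $Q_i^k$ as in the context (with $Q_i^k$ exact on $\mathbb P^{k-1}(I_i)$). Then the bilinear form $(v,\omega)\mapsto (v,M^*\omega)$ is an inner product on $\mathbb V^k$ if and only if for every cell $I_i$ both of the following hold: (1) $R_i^k(v)=0$ for all $v\in\mathbb P^{2k-1}(I_i)$; (2) $\frac{h_i}{2k-1}-Q_i^k(L_{i,k+1}L_{i,k-1})>0$.
   Context: Let $\Omega=[a,b]$ be partitioned into finitely many cells $I_i=[x_{i-\frac12},x_{i+\frac12}]$ with sizes $h_i=x_{i+\frac12}-x_{i-\frac12}$. $(\cdot,\cdot)$ is the $L^2(\Omega)$ inner product and $(\cdot,\cdot)_{I_i}$ the $L^2(I_i)$ inner product. $\mathbb V^k=\{v\in L^2(\Omega): v|_{I_i}\in\mathbb P^k(I_i)\ \forall i\}$. Each $I_i$ has subdivision points $x_{i-\frac12}=x_{i,0}<x_{i,1}<\dots<x_{i,k}<x_{i,k+1}=x_{i+\frac12}$ and control volumes $I_{i,j}=[x_{i,j},x_{i,j+1}]$, $j=0,\dots,k$; $\mathbb V^{k,*}$ is the space of functions constant on each $I_{i,j}$. On each $I_i$ a quadrature $Q_i^k(v)=\sum_{j=0}^{k+1}A_{i,j}v(x_{i,j})$ is given, with error $R_i^k(v)=\int_{I_i}v\,dx-Q_i^k(v)$, and it is assumed that $R_i^k(v)=0$ for all $v\in\mathbb P^{k-1}(I_i)$. The operator $M^*:\mathbb V^k\to\mathbb V^{k,*}$ is defined cellwise: for $v=\omega|_{I_i}$,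 $(M^*\omega)|_{I_{i,0}}=v(x_{i-\frac12})+A_{i,0}v'(x_{i-\frac12})$ and $(M^*\omega)|_{I_{i,j}}-(M^*\omega)|_{I_{i,j-1}}=A_{i,j}v'(x_{i,j})$, $j=1,\dots,k$ (values and derivatives at endpoints taken from inside $I_i$). $L_{i,\ell}$ denotes the shifted Legendre polynomial of degree $\ell$ on $I_i$ (the Legendre polynomial $P_\ell$ composed with the affine map of $I_i$ onto $[-1,1]$), so that $L_{i,\ell}(x_{i+\frac12})=1$ and $(L_{i,\ell},L_{i,m})_{I_i}=\delta_{\ell m}\,h_i/(2\ell+1)$. *)

(* All objects of the statement are polynomials (on each cell)
   or piecewise constants (on each control volume), so every L^2 integral that
   occurs is an integral of a polynomial over an interval; it is computed
   exactly via the polynomial antiderivative. *)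
From HB Require Import structures.
From mathcomp Require Import all_boot all_order all_algebra.
From mathcomp Require Import reals.
Set Implicit Arguments. Unset Strict Implicit. Unset Printing Implicit Defensive.
Import Order.TTheory GRing.Theory Num.Theory.
Local Open Scope ring_scope.

Section Defs.
Variable R : realType.

Definition poly_prim (p : {poly R}) : {poly R} :=
  \poly_(i < (size p).+1) (if i is j.+1 then p`_j / j.+1%:R else 0).

Definition poly_int (p : {poly R}) (a b : R) : R :=
  (poly_prim p).[b] - (poly_prim p).[a].

(* Legendre polynomials on [-1,1] via Bonnet's recurrence:
   legP n = (P_n, P_{n+1}), (n+2) P_{n+2} = (2n+3) X P_{n+1} - (n+1) P_n. *)
Fixpoint legP (n : nat) : {poly R} * {poly R} :=
  match n with
  | 0 => (1, 'X)
  | n'.+1 => let: (p, q) := legP n' in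
             (q, (n'.+2%:R)^-1 *: ((n'.*2.+3)%:R *: ('X * q) - (n'.+1)%:R *: p))
  end.
Definition legendre (n : nat) : {poly R} := (legP n).1.

Definition shifted_legendre (xl xr : R) (l : nat) : {poly R} :=
  legendre l \Po (((xr - xl)^-1 *: ('X *+ 2 - (xl + xr)%:P))).

(* ---- mesh data ----
   N cells; cell i (0 <= i < N) is I_i = [xb i, xb (i+1)] (= [x_{i-1/2}, x_{i+1/2}]);
   xs i j = x_{i,j} (0 <= j <= k+1) are the subdivision points of I_i;
   A i j = A_{i,j} (0 <= j <= k+1) are the quadrature weights on I_i.
   An element of V^k is a family v : nat -> {poly R}, v i = v|_{I_i}. *)

Definition in_Vk (k N : nat) (v : nat -> {poly R}) : Prop :=
  forall i, (i < N)%N -> (size (v i) <= k.+1)%N.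

Definition quad (k : nat) (xs A : nat -> nat -> R) (i : nat) (v : {poly R}) : R :=
  \sum_(j < k.+2) A i j * v.[xs i j].

Definition quad_err (k : nat) (xb : nat -> R) (xs A : nat -> nat -> R)
    (i : nat) (v : {poly R}) : R :=
  poly_int v (xb i) (xb i.+1) - quad k xs A i v.

(* value of M^* omega on the control volume I_{i,j} (0 <= j <= k), where
   v = omega|_{I_i}:  v(x_{i,0}) + sum_{m=0}^{j} A_{i,m} v'(x_{i,m}) *)
Definition Mstar_val (xs A : nat -> nat -> R) (i : nat) (v : {poly R}) (j : nat) : R :=
  v.[xs i 0%N] + \sum_(m < j.+1) A i m * (v^`()).[xs i m].

Definition Mstar_form (k N : nat) (xs A : nat -> nat -> R)
    (v w : nat -> {poly R}) : R :=
  \sum_(i < N) \sum_(j < k.+1)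
     Mstar_val xs A i (w i) j * poly_int (v i) (xs i j) (xs i j.+1).

(* the (automatically bilinear) form is an inner product on V^k:
   symmetric and positive definite *)
Definition is_inner_product_on_Vk (k N : nat) (xs A : nat -> nat -> R) : Prop :=
  (forall v w, in_Vk k N v -> in_Vk k N w ->
      Mstar_form k N xs A v w = Mstar_form k N xs A w v) /\
  (forall v, in_Vk k N v -> (exists i, (i < N)%N /\ v i != 0) ->
      0 < Mstar_form k N xs A v v).

End Defs.

From HB Require Import structures.
From mathcomp Require Import all_boot all_order all_algebra.
From mathcomp Require Import reals polyrcf ring lra zify.
Set Implicit Arguments. Unset Strict Implicit. Unset Printing Implicit Defensive.
Import Order.TTheory GRing.Theory Num.Theory.
Local Open Scope ring_scope.

(* Summation by parts on the control volumes turns the cell contribution of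
   (v, M^* w) into \int_{I_i} v w - R_i^k(w' W_v), where W_v(x) = \int_x^{x_{i+1/2}} v.
   Symmetry of this correction term on P^k, tested on powers of x - x_{i+1/2},
   forces R_i^k to vanish on P^{2k-1}; conversely, once it does, the correction
   only sees leading coefficients: it equals -k/(k+1) v_k w_k R_i^k(x^{2k}).
   Writing u = q + alpha L_{i,k} with deg q < k, orthogonality of L_{i,k} reduces
   positivity on P^k to positivity at u = L_{i,k}, and the recurrence for the
   leading coefficients of the Legendre polynomials turns that quantity, up to
   the factor (2k-1)/(2k+1), into condition (2). *)

Lemma abel_summation (R : comRingType) n (a : R) (b u : nat -> R) :
  \sum_(j < n) (a + \sum_(m < j.+1) b m) * (u j.+1 - u j)
  = a * (u n - u 0%N) + \sum_(m < n) b m * (u n - u m).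
Proof.
elim: n => [|n IHn]; first by rewrite !big_ord0 subrr mulr0 addr0.
rewrite big_ord_recr /= IHn !big_ord_recr /=.
have -> : \sum_(m < n) b m * (u n.+1 - u m) =
          \sum_(m < n) b m * (u n - u m) + (\sum_(m < n) b m) * (u n.+1 - u n).
  by rewrite mulr_suml -big_split; apply: eq_bigr => j _ /=; ring.
ring.
Qed.

Lemma deriv_eq0 (R : numDomainType) (p : {poly R}) : p^`() = 0 -> p = (p`_0)%:P.
Proof.
move=> p'0; apply/polyP => -[|i]; rewrite coefC //=.
have /eqP := congr1 (fun q : {poly R} => q`_i) p'0.
by rewrite coef_deriv coef0 -mulr_natr mulf_eq0 pnatr_eq0 orbF => /eqP.
Qed.

Lemma coefM_top (R : nzRingType) (p q : {poly R}) m n :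
  (size p <= m.+1)%N -> (size q <= n.+1)%N -> (p * q)`_(m + n) = p`_m * q`_n.
Proof.
move=> sp sq; have lt_m : (m < (m + n).+1)%N by rewrite ltnS leq_addr.
rewrite coefM (bigD1 (Ordinal lt_m)) //= addKn big1 ?addr0 // => j neq_jm.
have [lt_mj|le_jm] := ltnP m j; first by rewrite (nth_default _ (leq_trans sp lt_mj)) mul0r.
have j_neq_m : nat_of_ord j != m by apply: contra_neq neq_jm => ejm; apply: val_inj.
by rewrite (@nth_default _ _ q) ?mulr0 //; move: (ltn_ord j); lia.
Qed.

Lemma size_cancel_coef (R : fieldType) (p q : {poly R}) m :
  (size q <= m.+1)%N -> (size p <= m.+1)%N -> p`_m != 0 ->
  (size (q - (q`_m / p`_m) *: p)%R <= m)%N.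
Proof.
move=> sq sp pm_neq0; apply/leq_sizeP => j le_mj.
rewrite coefB coefZ; have [lt_mj|le_jm] := ltnP m j.
  by rewrite (nth_default 0 (leq_trans sq lt_mj)) (nth_default 0 (leq_trans sp lt_mj)) mulr0 subr0.
have -> : j = m by apply/eqP; rewrite eqn_leq le_jm.
by rewrite divfK ?subrr.
Qed.

Lemma size_deriv_leq (R : nzRingType) (p : {poly R}) n :
  (size p <= n.+1)%N -> (size p^`() <= n)%N.
Proof.
by move=> sp; apply/leq_sizeP => j le_nj; rewrite coef_deriv nth_default ?mul0rn // (leq_trans sp).
Qed.

Lemma linear_eq0_size_leq (R : fieldType) (F : {poly R} -> R) (p : nat -> {poly R}) n :
  linear_for *%R F -> (forall m, size (p m) = m.+1) ->
  (forall m, (m < n)%N -> F (p m) = 0) -> forall q : {poly R}, (size q <= n)%N -> F q = 0.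
Proof.
move=> F_lin size_p; elim: n => [_ q|n IHn Fp q sq].
  rewrite size_poly_leq0 => /eqP ->.
  by have := F_lin (-1) 0 0; rewrite scaleN1r oppr0 addr0 mulN1r addNr.
have pn_neq0 : (p n)`_n != 0.
  by rewrite -[n in _`_n]/(n.+1.-1) -(size_p n) -/(lead_coef _) lead_coef_eq0 -size_poly_gt0 size_p.
set c := q`_n / (p n)`_n.
have -> : q = c *: p n + (q - c *: p n) by rewrite addrC subrK.
rewrite F_lin Fp // mulr0 add0r; apply: IHn => [m lt_mn|]; first by apply: Fp; rewrite ltnS ltnW.
by apply: size_cancel_coef; rewrite ?size_p.
Qed.

Lemma poly_eq0_on_itv (R : realFieldType) (p : {poly R}) (a b : R) : a < b ->
  {in `[a, b], forall x, p.[x] = 0} -> p = 0.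
Proof.
move=> lt_ab p_itv; apply/eqP; apply: contraT => p_neq0.
pose x (j : nat) := a + (b - a) / j.+1%:R.
have x_itv j : x j \in `[a, b].
  have d_ge0 : 0 <= (b - a) / j.+1%:R by rewrite divr_ge0 ?ler0n // subr_ge0 ltW.
  have d_le : (b - a) / j.+1%:R <= b - a.
    by rewrite ler_pdivrMr ?ltr0n // ler_peMr ?ler1n // subr_ge0 ltW.
  by rewrite in_itv /= /x lerDl d_ge0 addrC -lerBrDr.
have x_inj : injective x.
  move=> i j /addrI /mulfI; rewrite subr_eq0 gt_eqF // => /(_ isT) /invr_inj /eqP.
  by rewrite eqr_nat => /eqP [].
have := max_poly_roots p_neq0 (rs := map x (iota 0 (size p))).
rewrite size_map size_iota ltnn map_inj_uniq ?iota_uniq // => /(_ _ isT); apply.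
by apply/allP => _ /mapP [j _ ->]; rewrite /root p_itv.
Qed.

Section PolyIntegral.
Variable R : realType.
Implicit Types (p q u w P W : {poly R}) (a b xr : R).

Lemma poly_prim_deriv p : (poly_prim p)^`() = p.
Proof.
apply/polyP => i; rewrite coef_deriv coef_poly ltnS.
have [lt_ip|le_pi] := ltnP i (size p); last by rewrite nth_default // mul0rn.
by rewrite -[LHS]mulr_natr divfK ?pnatr_eq0.
Qed.

Lemma poly_intE p P a b : P^`() = p -> poly_int p a b = P.[b] - P.[a].
Proof.
move=> P'p.
have /deriv_eq0 c_e : (poly_prim p - P)^`() = 0 by rewrite derivB poly_prim_deriv P'p subrr.
rewrite /poly_int -[poly_prim p](subrK P) c_e !hornerD !hornerC; ring.
Qed.

Lemma poly_intD p q a b : poly_int (p + q) a b = poly_int p a b + poly_int q a b.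
Proof.
rewrite (@poly_intE _ (poly_prim p + poly_prim q)) ?derivD ?poly_prim_deriv //.
by rewrite /poly_int !hornerD; ring.
Qed.

Lemma poly_intZ c p a b : poly_int (c *: p) a b = c * poly_int p a b.
Proof.
rewrite (@poly_intE _ (c *: poly_prim p)) ?derivZ ?poly_prim_deriv //.
by rewrite /poly_int !hornerZ mulrBr.
Qed.

Lemma poly_intB p q a b : poly_int (p - q) a b = poly_int p a b - poly_int q a b.
Proof. by rewrite -scaleN1r poly_intD poly_intZ mulN1r. Qed.

Lemma poly_int_sqr_ge0 q a b : a <= b -> 0 <= poly_int (q * q) a b.
Proof.
move=> le_ab; rewrite /poly_int subr_ge0.
apply: (ler_hornerW (a := a) (b := b)); rewrite ?in_itv /= ?lexx ?le_ab //.
by move=> x _; rewrite poly_prim_deriv hornerM -expr2 sqr_ge0.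
Qed.

Lemma poly_int_sqr_gt0 q a b : a < b -> q != 0 -> 0 < poly_int (q * q) a b.
Proof.
move=> lt_ab q_neq0; rewrite lt_neqAle poly_int_sqr_ge0 ?ltW // andbT eq_sym.
apply: contra q_neq0 => /eqP int0; set P := poly_prim (q * q).
have P_mono : {in `[a, b] &, {homo horner P : x y / x <= y}}.
  by apply: ler_hornerW => x _; rewrite poly_prim_deriv hornerM -expr2 sqr_ge0.
have [a_itv b_itv] : a \in `[a, b] /\ b \in `[a, b] by rewrite !in_itv /= !lexx (ltW lt_ab).
have Pb : P.[b] = P.[a] by apply/eqP; rewrite -subr_eq0 -int0.
have /(congr1 deriv) : P - P.[a]%:P = 0.
  apply: (poly_eq0_on_itv lt_ab) => x x_itv; apply/eqP.
  move: (x_itv); rewrite in_itv /= => /andP [le_ax le_xb].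
  rewrite hornerD hornerN hornerC subr_eq0 eq_le (P_mono _ _ a_itv x_itv le_ax) andbT -Pb.
  exact: P_mono.
by rewrite derivB derivC subr0 poly_prim_deriv deriv0 => /eqP; rewrite mulf_eq0 orbb.
Qed.

Definition ref_affine (xl xr : R) : {poly R} := (xr - xl)^-1 *: ('X *+ 2 - (xl + xr)%:P).

Lemma ref_affineE xl xr : ref_affine xl xr = (2 / (xr - xl)) *: ('X - ((xl + xr) / 2)%:P).
Proof.
apply/polyP => -[|[|j]]; rewrite /ref_affine !(coefZ, coefB, coefMn, coefX, coefC) /=.
- rewrite mul0rn !sub0r !mulrN [2 / _]mulrC -mulrA [2 * _]mulrCA divff ?pnatr_eq0 //.
  by rewrite mulr1.
- by rewrite !subr0 mulr1 mulrC.
- by rewrite mul0rn subrr !mulr0.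
Qed.

Section RefAffine.
Variables (xl xr : R).
Hypothesis lt_lr : xl < xr.

Let len_neq0 : xr - xl != 0. Proof. by rewrite subr_eq0 gt_eqF. Qed.

Lemma size_ref_affine : size (ref_affine xl xr) = 2.
Proof. by rewrite ref_affineE size_scale ?size_XsubC // mulf_neq0 ?pnatr_eq0 ?invr_eq0. Qed.

Lemma lead_coef_ref_affine : lead_coef (ref_affine xl xr) = 2 / (xr - xl).
Proof. by rewrite ref_affineE lead_coefZ lead_coefXsubC mulr1. Qed.

Lemma deriv_ref_affine : (ref_affine xl xr)^`() = (2 / (xr - xl))%:P.
Proof. by rewrite ref_affineE derivZ derivXsubC alg_polyC. Qed.

Lemma poly_int_comp_ref_affine p :
  poly_int (p \Po ref_affine xl xr) xl xr = (xr - xl) / 2 * poly_int p (-1) 1.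
Proof.
rewrite (@poly_intE _ (((xr - xl) / 2) *: (poly_prim p \Po ref_affine xl xr))); last first.
  rewrite derivZ deriv_comp poly_prim_deriv deriv_ref_affine [_ * _%:P]mulrC mul_polyC scalerA.
  by rewrite mulrA divfK ?pnatr_eq0 // divff // scale1r.
rewrite !hornerZ !horner_comp ref_affineE !hornerZ !hornerXsubC /poly_int -mulrBr.
by congr (_ * ((poly_prim p).[_] - (poly_prim p).[_])); field.
Qed.

End RefAffine.

Definition tail_prim (xr : R) (u : {poly R}) : {poly R} := (poly_prim u).[xr]%:P - poly_prim u.

Lemma deriv_tail_prim xr u : (tail_prim xr u)^`() = - u.
Proof. by rewrite derivB derivC poly_prim_deriv sub0r. Qed.

Lemma tail_prim_root xr u : (tail_prim xr u).[xr] = 0.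
Proof. by rewrite hornerD hornerN hornerC subrr. Qed.

Lemma tail_primE xr u W : W^`() = - u -> W.[xr] = 0 -> tail_prim xr u = W.
Proof.
move=> W'u Wxr; have /deriv_eq0 c_e : (tail_prim xr u - W)^`() = 0.
  by rewrite derivB deriv_tail_prim W'u subrr.
have : (tail_prim xr u - W).[xr] = 0 by rewrite hornerD hornerN tail_prim_root Wxr subrr.
by rewrite c_e hornerC => c0; apply/eqP; rewrite -subr_eq0 c_e c0.
Qed.

Lemma tail_prim_XsubC_exp xr n :
  tail_prim xr (('X - xr%:P) ^+ n) = - (n.+1%:R)^-1 *: ('X - xr%:P) ^+ n.+1.
Proof.
apply: tail_primE; last by rewrite hornerZ horner_exp hornerXsubC subrr expr0n mulr0.
rewrite derivZ deriv_exp derivXsubC mul1r -scaler_nat scalerA mulNr mulVf ?pnatr_eq0 //.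
by rewrite scaleN1r.
Qed.

Lemma coef_tail_prim xr u n : (tail_prim xr u)`_n.+1 = - (u`_n / n.+1%:R).
Proof.
rewrite coefB coefC sub0r coef_poly ltnS; case: ltnP => // le_un.
by rewrite nth_default // mul0r oppr0.
Qed.

Lemma size_tail_prim xr u n : (size u <= n.+1)%N -> (size (tail_prim xr u) <= n.+2)%N.
Proof.
move=> su; apply/leq_sizeP => -[//|j] lt_nj.
by rewrite coef_tail_prim nth_default ?mul0r ?oppr0 // (leq_trans su).
Qed.

Lemma coef_deriv_mul_tail_prim xr u w k :
  (size u <= k.+1)%N -> (size w <= k.+1)%N ->
  (w^`() * tail_prim xr u)`_(k.*2) = - (k%:R / k.+1%:R) * (u`_k * w`_k).
Proof.
case: k => [_|k su sw]; first by move/size1_polyC ->; rewrite derivC mul0r coef0 mul0r oppr0 mul0r.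
have -> : (k.+1.*2 = k + k.+2)%N by rewrite -addnn addSnnS.
by rewrite coefM_top ?size_tail_prim ?size_deriv_leq // coef_deriv coef_tail_prim; ring.
Qed.

End PolyIntegral.

Section Legendre.
Variable R : realType.
Local Notation P := (legendre R).
Local Notation int11 p := (poly_int p (-1) 1).

Lemma legendre0 : P 0 = 1. Proof. by []. Qed.

Lemma legendre1 : P 1 = 'X. Proof. by []. Qed.

Lemma legendre_rec n :
  n.+1%:R *: P n.+1 = (n.*2.+1)%:R *: ('X * P n) - n%:R *: P n.-1.
Proof.
case: n => [|n]; first by rewrite scale0r subr0 mulr1.
have -> : P n.+2 = (n.+2%:R)^-1 *: ((n.*2.+3)%:R *: ('X * P n.+1) - n.+1%:R *: P n).
  by rewrite /legendre /=; case: (legP R n).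
by rewrite scalerA mulfV ?scale1r ?pnatr_eq0.
Qed.

Lemma int11_legendre_rec n q :
  n.+1%:R * int11 (P n.+1 * q)
  = (n.*2.+1)%:R * int11 (P n * ('X * q)) - n%:R * int11 (P n.-1 * q).
Proof.
rewrite -!poly_intZ -poly_intB scalerAl legendre_rec mulrBl -!scalerAl.
by congr (poly_int (_ *: _ - _) _ _); ring.
Qed.

Lemma legendre_deriv_rec n :
  (P n.+1)^`() = 'X * (P n)^`() + n.+1%:R *: P n /\
  'X * (P n.+1)^`() - (P n)^`() = n.+1%:R *: P n.+1.
Proof.
elim: n => [|n [IHl IHr]].
  by rewrite legendre1 legendre0 derivX derivC mulr0 add0r subr0 mulr1 !scale1r.
have n2_neq0 : n.+2%:R != 0 :> R by rewrite pnatr_eq0.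
have dPn : (P n)^`() = 'X * (P n.+1)^`() - n.+1%:R *: P n.+1 by rewrite -IHr opprB addrC subrK.
have dPSS : (P n.+2)^`() = 'X * (P n.+1)^`() + n.+2%:R *: P n.+1.
  apply: (scalerI n2_neq0); rewrite -derivZ legendre_rec derivB !derivZ derivM derivX dPn.
  by rewrite !scaler_nat -!addnn; ring.
split=> //; apply: (scalerI n2_neq0).
rewrite dPSS scalerA mulrC -scalerA legendre_rec.
have nPn : n.+1%:R *: P n = (P n.+1)^`() - 'X * (P n)^`() by rewrite IHl addrC addKr.
by rewrite /= nPn dPn !scaler_nat -!addnn; ring.
Qed.

Lemma deriv_legendreSS_sub n : (P n.+2 - P n)^`() = (n.*2.+3)%:R *: P n.+1.
Proof.
have [dPSS _] := legendre_deriv_rec n.+1; have [_ dPS] := legendre_deriv_rec n.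
have dPn : (P n)^`() = 'X * (P n.+1)^`() - n.+1%:R *: P n.+1.
  by rewrite -dPS opprB addrC subrK.
rewrite derivB dPSS dPn.
by rewrite !scaler_nat -!addnn; ring.
Qed.

Lemma horner_legendre_sqr1 x n : x ^+ 2 = 1 -> (P n).[x] = x ^+ n.
Proof.
move=> x2; suff: (P n).[x] = x ^+ n /\ (P n.+1).[x] = x ^+ n.+1 by case.
elim: n => [|n [IHn IHSn]]; first by rewrite legendre0 legendre1 hornerC hornerX.
split=> //; apply: (mulfI (_ : n.+2%:R != 0)); first by rewrite pnatr_eq0.
rewrite -hornerZ legendre_rec !(hornerD, hornerN, hornerZ, hornerM, hornerX) IHSn IHn.
by rewrite !exprS mulrA -expr2 x2 mul1r -!addnn; ring.
Qed.

Lemma int11_legendre n : int11 (P n.+1) = 0.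
Proof.
rewrite (@poly_intE _ _ ((n.*2.+3)%:R^-1 *: (P n.+2 - P n))); last first.
  by rewrite derivZ deriv_legendreSS_sub scalerA mulVf ?scale1r ?pnatr_eq0.
rewrite !hornerZ !hornerD !hornerN !horner_legendre_sqr1 ?expr1n ?sqrrN ?expr1n //.
by rewrite -[n.+2]addn2 exprD sqrrN expr1n mulr1 !subrr.
Qed.

Lemma legendre_orth m n : (m < n)%N -> int11 (P n * P m) = 0.
Proof.
elim/ltn_ind: m n => -[_ [|n] // _|m IHm n lt_mn]; first by rewrite mulr1 int11_legendre.
have XPn_Pm : int11 (P n * ('X * P m)) = 0.
  have := int11_legendre_rec n (P m).
  rewrite (IHm m _ n.+1) ?(IHm m _ n.-1) //; try lia.
  by rewrite !mulr0 subr0 => /esym /eqP; rewrite mulf_eq0 pnatr_eq0 => /eqP.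
apply: (mulfI (_ : m.+1%:R != 0)); first by rewrite pnatr_eq0.
rewrite mulr0 [P n * _]mulrC int11_legendre_rec [P m.-1 * _]mulrC (IHm m.-1) //; try lia.
have -> : P m * ('X * P n) = P n * ('X * P m) by ring.
by rewrite XPn_Pm !mulr0 subr0.
Qed.

Lemma legendre_norm n : int11 (P n * P n) = 2 / (n.*2.+1)%:R.
Proof.
elim: n => [|n IHn].
  by rewrite mulr1 (@poly_intE _ _ 'X) ?derivX // !hornerX opprK divr1.
set T := int11 (P n.+1 * ('X * P n)).
have N1_T : int11 (P n.+1 * P n.+1) = (n.+1%:R)^-1 * ((n.*2.+1)%:R * T).
  have := int11_legendre_rec n (P n.+1).
  rewrite [P n.-1 * _]mulrC (@legendre_orth n.-1 n.+1); last by lia.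
  have -> : P n * ('X * P n.+1) = P n.+1 * ('X * P n) by ring.
  by rewrite mulr0 subr0 => <-; rewrite mulKf ?pnatr_eq0.
have T_N0 : T = ((n.*2.+3)%:R)^-1 * (n.+1%:R * int11 (P n * P n)).
  have := int11_legendre_rec n.+1 (P n).
  rewrite legendre_orth // mulr0 => /esym /eqP; rewrite subr_eq0 => /eqP <-.
  by rewrite mulKf ?pnatr_eq0.
rewrite N1_T T_N0 IHn -!addnn; field.
by have n_ge0 := ler0n R n; apply/and3P; split; apply: lt0r_neq0; lra.
Qed.

Lemma legendreS_size_lead n : size (P n) = n.+1 -> (size (P n.-1) <= n.+1)%N ->
  size (P n.+1) = n.+2 /\ n.+1%:R * lead_coef (P n.+1) = (n.*2.+1)%:R * lead_coef (P n).
Proof.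
move=> sPn sPp; have n1_neq0 : n.+1%:R != 0 :> R by rewrite pnatr_eq0.
have sXPn : size ((n.*2.+1)%:R *: ('X * P n)) = n.+2.
  by rewrite size_scale ?pnatr_eq0 // mulrC size_mulX ?sPn // -size_poly_gt0 sPn.
have lt_s : (size (- (n%:R *: P n.-1)) < size ((n.*2.+1)%:R *: ('X * P n)))%N.
  by rewrite size_polyN sXPn ltnS (leq_trans (size_scale_leq _ _)).
split; first by rewrite -(size_scale _ n1_neq0) legendre_rec size_polyDl.
by rewrite -lead_coefZ legendre_rec lead_coefDl // lead_coefZ [_ * P n]mulrC lead_coefMX.
Qed.

Lemma size_legendre n : size (P n) = n.+1.
Proof.
elim/ltn_ind: n => -[|n] IHn; first by rewrite legendre0 size_poly1.
have sPp : (size (P n.-1) <= n.+1)%N.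
  by case: n IHn => [|n] IHn; rewrite ?legendre0 ?size_poly1 // IHn ?ltnS ?leqnSn.
by case: (legendreS_size_lead (IHn n (ltnSn n)) sPp).
Qed.

Lemma lead_coef_legendreS n :
  n.+1%:R * lead_coef (P n.+1) = (n.*2.+1)%:R * lead_coef (P n).
Proof. by apply: (proj2 (@legendreS_size_lead n _ _)); rewrite !size_legendre //; lia. Qed.

End Legendre.

Section ShiftedLegendre.
Variables (R : realType) (xl xr : R).
Hypothesis lt_lr : xl < xr.
Local Notation S := (shifted_legendre xl xr).

Lemma shifted_legendreE n : S n = legendre R n \Po ref_affine xl xr.
Proof. by []. Qed.

Lemma size_shifted_legendre n : size (S n) = n.+1.
Proof. by rewrite shifted_legendreE size_comp_poly2 ?size_ref_affine ?size_legendre. Qed.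

Lemma lead_coef_shifted_legendre n :
  lead_coef (S n) = lead_coef (legendre R n) * (2 / (xr - xl)) ^+ n.
Proof.
by rewrite shifted_legendreE lead_coef_comp ?size_ref_affine // lead_coef_ref_affine // size_legendre.
Qed.

Lemma coef_shifted_legendre_top n : (S n)`_n = lead_coef (S n).
Proof. by rewrite lead_coefE size_shifted_legendre. Qed.

Lemma shifted_legendre_orth n (q : {poly R}) : (size q <= n)%N -> poly_int (S n * q) xl xr = 0.
Proof.
apply: (@linear_eq0_size_leq _ (fun q => poly_int (S n * q) xl xr) S n) => [c p r|m|m lt_mn].
- by rewrite mulrDr -scalerAr poly_intD poly_intZ.
- by rewrite size_shifted_legendre.
by rewrite !shifted_legendreE -comp_polyM poly_int_comp_ref_affine // legendre_orth ?mulr0.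
Qed.

Lemma shifted_legendre_norm n : poly_int (S n * S n) xl xr = (xr - xl) / (n.*2.+1)%:R.
Proof.
rewrite !shifted_legendreE -comp_polyM poly_int_comp_ref_affine // legendre_norm.
by rewrite mulrA divfK ?pnatr_eq0.
Qed.

End ShiftedLegendre.

Lemma quad_err_is_linear (R : realType) k xb (xs A : nat -> nat -> R) i :
  linear_for *%R (quad_err k xb xs A i).
Proof.
move=> c p q; rewrite /quad_err poly_intD poly_intZ.
have -> : quad k xs A i (c *: p + q) = c * quad k xs A i p + quad k xs A i q.
  rewrite /quad mulr_sumr -big_split; apply: eq_bigr => j _ /=.
  by rewrite hornerD hornerZ; ring.
by rewrite /=; ring.
Qed.

HB.instance Definition _ (R : realType) k xb (xs A : nat -> nat -> R) i :=
  GRing.isLinear.Build R {poly R} R *%R (quad_err k xb xs A i) (quad_err_is_linear k xb xs A i).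

Section Quadrature.
Variables (R : realType) (k : nat) (xb : nat -> R) (xs A : nat -> nat -> R) (i : nat).
Local Notation Rq := (quad_err k xb xs A i).

(* Restated for [quad_err] itself: the generic lemmas leave the [{scalar _}]
   projection in the goal, which later rewrites do not match. *)

Lemma quad_errZ c p : Rq (c *: p) = c * Rq p.
Proof. exact: scalarZ. Qed.

Lemma quad_errB p q : Rq (p - q) = Rq p - Rq q.
Proof. exact: raddfB. Qed.

Lemma quad_err0 : Rq 0 = 0.
Proof. exact: raddf0. Qed.

Lemma quad_err_sum I (r : seq I) (F : I -> {poly R}) : Rq (\sum_(j <- r) F j) = \sum_(j <- r) Rq (F j).
Proof. exact: raddf_sum. Qed.

Lemma quadE p : quad k xs A i p = poly_int p (xb i) (xb i.+1) - Rq p.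
Proof. by rewrite /quad_err opprB addrC subrK. Qed.
End Quadrature.

Section Cell.
Variables (R : realType) (k : nat) (xb : nat -> R) (xs A : nat -> nat -> R) (i : nat).
Implicit Types (p u w : {poly R}).
Local Notation xl := (xb i).
Local Notation xr := (xb i.+1).
Local Notation Rq := (quad_err k xb xs A i).
Local Notation S := (shifted_legendre xl xr).

Definition quad_exact n := forall p, (size p <= n)%N -> Rq p = 0.

Definition Mstar_defect u w := Rq (w^`() * tail_prim xr u).

Definition Mstar_energy u := poly_int (u * u) xl xr - Mstar_defect u u.

Definition Mstar_cell u w :=
  \sum_(j < k.+1) Mstar_val xs A i w j * poly_int u (xs i j) (xs i j.+1).

Lemma Mstar_cellE u w : xs i 0%N = xl -> xs i k.+1 = xr ->
  Mstar_cell u w = poly_int (u * w) xl xr - Mstar_defect u w.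
Proof.
move=> xs0 xsk; rewrite /Mstar_defect.
have T'u := deriv_tail_prim xr u; have Txr := tail_prim_root xr u.
have Tx x : (tail_prim xr u).[x] = (poly_prim u).[xr] - (poly_prim u).[x].
  by rewrite hornerD hornerN hornerC.
move: (tail_prim xr u) T'u Txr Tx => T T'u Txr Tx.
have by_parts : poly_int (w^`() * T) xl xr = poly_int (u * w) xl xr - w.[xl] * T.[xl].
  rewrite (@poly_intE _ _ (w * T + poly_prim (u * w))); last first.
    by rewrite derivD derivM T'u poly_prim_deriv; ring.
  by rewrite /poly_int !(hornerD, hornerM) Txr; ring.
rewrite /quad_err by_parts /quad big_ord_recr /= xsk hornerM Txr !mulr0 addr0.
rewrite /Mstar_cell /Mstar_val /poly_int.
rewrite (abel_summation _ _ (fun m => A i m * w^`().[xs i m]) (fun j => (poly_prim u).[xs i j])).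
under [in RHS]eq_bigr => j _ do rewrite hornerM Tx mulrA.
by rewrite Tx xsk xs0; ring.
Qed.

Lemma quad_err_top p : quad_exact k.*2 -> (size p <= k.*2.+1)%N ->
  Rq p = p`_(k.*2) * Rq 'X^(k.*2).
Proof.
move=> exact2k sp; apply/eqP; rewrite -subr_eq0 -quad_errZ -quad_errB; apply/eqP/exact2k.
have Xn_top : 'X^(k.*2)`_(k.*2) != 0 :> R by rewrite coefXn eqxx oner_eq0.
by have := size_cancel_coef sp (eq_leq (size_polyXn _ _)) Xn_top; rewrite coefXn eqxx divr1.
Qed.

Lemma Mstar_defectE u w : quad_exact k.*2 -> (size u <= k.+1)%N -> (size w <= k.+1)%N ->
  Mstar_defect u w = - (k%:R / k.+1%:R) * (u`_k * w`_k) * Rq 'X^(k.*2).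
Proof.
move=> exact2k su sw; rewrite /Mstar_defect quad_err_top ?coef_deriv_mul_tail_prim //.
apply: leq_trans (size_polyMleq _ _) _; rewrite -subn1 leq_subLR add1n -addnn -!addnS.
exact: leq_add (size_deriv_leq sw) (size_tail_prim xr su).
Qed.

Lemma Mstar_defect_XsubC_exp a b :
  Mstar_defect (('X - xr%:P) ^+ a) (('X - xr%:P) ^+ b)
  = - (b%:R / a.+1%:R) * Rq (('X - xr%:P) ^+ (a + b)).
Proof.
rewrite /Mstar_defect tail_prim_XsubC_exp deriv_exp derivXsubC mul1r.
case: b => [|b]; first by rewrite mulr0n mul0r quad_err0 mul0r oppr0 mul0r.
by rewrite -scaler_nat -scalerAl -scalerAr scalerA -exprD quad_errZ succnK !addnS addnC mulrN.
Qed.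

Lemma quad_exact_double : quad_exact k ->
  (forall u w, (size u <= k.+1)%N -> (size w <= k.+1)%N -> Mstar_defect u w = Mstar_defect w u) ->
  quad_exact k.*2.
Proof.
move=> exactk sym.
have exactY n : (n < k.*2)%N -> Rq (('X - xr%:P) ^+ n) = 0.
  move=> lt_n2k; have [lt_nk|le_kn] := ltnP n k.
    by apply: exactk; rewrite size_exp_XsubC.
  have [b -> lt_bk] : exists2 b, n = (k + b)%N & (b < k)%N by exists (n - k)%N; lia.
  have lt_coef : b%:R / k.+1%:R < k%:R / b.+1%:R :> R.
    rewrite ltr_pdivrMr ?ltr0Sn // mulrAC ltr_pdivlMr ?ltr0Sn // -!natrM ltr_nat.
    by apply: ltn_mul.
  have := sym (('X - xr%:P) ^+ k) (('X - xr%:P) ^+ b).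
  rewrite !Mstar_defect_XsubC_exp !size_exp_XsubC leqnn ltnW // addnC => /(_ isT isT) /eqP.
  rewrite !mulNr eqr_opp -subr_eq0 -mulrBl mulf_eq0 subr_eq0 (lt_eqF lt_coef) orFb.
  by move/eqP.
move=> p sp; rewrite -(comp_polyXaddC_K p xr) comp_polyE quad_err_sum big1 // => j _.
rewrite quad_errZ exactY ?mulr0 //; apply: leq_trans (ltn_ord j) _.
by rewrite size_comp_poly2 ?size_XaddC.
Qed.

Lemma Mstar_energy_gt0 u : xl < xr -> quad_exact k.*2 -> 0 < Mstar_energy (S k) ->
  (size u <= k.+1)%N -> u != 0 -> 0 < Mstar_energy u.
Proof.
move=> lt_lr exact2k G_gt0 su u_neq0.
have Sk_neq0 : (S k)`_k != 0.
  by rewrite coef_shifted_legendre_top // lead_coef_eq0 -size_poly_gt0 size_shifted_legendre.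
set a := u`_k / (S k)`_k; set q := u - a *: S k.
have sq : (size q <= k)%N by apply: size_cancel_coef; rewrite ?size_shifted_legendre.
have uE : u = q + a *: S k by rewrite subrK.
have energyE : Mstar_energy u = poly_int (q * q) xl xr + a ^+ 2 * Mstar_energy (S k).
  rewrite /Mstar_energy; have -> : u * u = q * q + (a + a) *: (S k * q) + (a * a) *: (S k * S k).
    by rewrite {1 2}uE -!mul_polyC polyCD polyCM; ring.
  rewrite !Mstar_defectE ?size_shifted_legendre // !poly_intD !poly_intZ.
  have uk : u`_k = a * (S k)`_k by rewrite divfK.
  by rewrite shifted_legendre_orth // uk; ring.
rewrite energyE; have [a0|a_neq0] := eqVneq a 0.
  by rewrite a0 expr0n mul0r addr0 /q a0 scale0r subr0 poly_int_sqr_gt0.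
by rewrite ltr_pwDr ?poly_int_sqr_ge0 ?ltW // mulr_gt0 // exprn_even_gt0.
Qed.

End Cell.

Definition cell_inner_product (R : realType) k (xs A : nat -> nat -> R) i :=
  (forall u w : {poly R}, (size u <= k.+1)%N -> (size w <= k.+1)%N ->
     Mstar_cell k xs A i u w = Mstar_cell k xs A i w u) /\
  (forall u : {poly R}, (size u <= k.+1)%N -> u != 0 -> 0 < Mstar_cell k xs A i u u).

Section CellLegendre.
Variables (R : realType) (xb : nat -> R) (xs A : nat -> nat -> R) (i : nat).
Local Notation xl := (xb i).
Local Notation xr := (xb i.+1).
Local Notation S := (shifted_legendre xl xr).
Hypothesis lt_lr : xl < xr.

Lemma Mstar_energy_legendre k : quad_exact k.+1 xb xs A i k.+1.*2 ->
  (k.*2.+1)%:R * ((xr - xl) / (k.*2.+1)%:R - quad k.+1 xs A i (S k.+2 * S k))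
  = (k.*2.+3)%:R * Mstar_energy k.+1 xb xs A i (S k.+1).
Proof.
move=> exact2k; set rho := quad_err k.+1 xb xs A i 'X^(k.+1.*2).
have quadSS : quad k.+1 xs A i (S k.+2 * S k) = - (lead_coef (S k.+2) * lead_coef (S k)) * rho.
  rewrite (quadE _ xb) shifted_legendre_orth ?size_shifted_legendre // sub0r quad_err_top //; last first.
    by apply: leq_trans (size_polyMleq _ _) _; rewrite !size_shifted_legendre //; lia.
  rewrite -/rho; have -> : (k.+1.*2 = k.+2 + k)%N by rewrite -addnn; lia.
  by rewrite coefM_top ?size_shifted_legendre // !coef_shifted_legendre_top // mulNr.
rewrite /Mstar_energy quadSS shifted_legendre_norm // Mstar_defectE ?size_shifted_legendre // -/rho.
rewrite !coef_shifted_legendre_top // !lead_coef_shifted_legendre //.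
have l2E := lead_coef_legendreS R k.+1; have l1E := lead_coef_legendreS R k.
move: (lead_coef (legendre R k.+2)) (lead_coef (legendre R k.+1)) (lead_coef (legendre R k)) l2E l1E.
move=> l2 l1 l0 l2E l1E.
have -> : l2 = k.+2%:R^-1 * ((k.+1.*2.+1)%:R * l1) by rewrite -l2E mulKf ?pnatr_eq0.
have -> : l0 = (k.*2.+1)%:R^-1 * (k.+1%:R * l1) by rewrite l1E mulKf ?pnatr_eq0.
rewrite !exprS -!addnn; field.
rewrite subr_eq0 (gt_eqF lt_lr) /=; have k_ge0 := ler0n R k.
by apply/and3P; split; apply: lt0r_neq0; lra.
Qed.

Lemma cell_inner_productP k : (0 < k)%N ->
  xs i 0%N = xl -> xs i k.+1 = xr -> quad_exact k xb xs A i k ->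
  cell_inner_product k xs A i <->
  quad_exact k xb xs A i k.*2 /\
  0 < (xr - xl) / (k.*2.-1)%:R - quad k xs A i (S k.+1 * S k.-1).
Proof.
case: k => [//|k] _ xs0 xsk exactk; rewrite doubleS /=.
have cellE u w := @Mstar_cellE R k.+1 xb xs A i u w xs0 xsk.
have energyE u : Mstar_cell k.+1 xs A i u u = Mstar_energy k.+1 xb xs A i u := cellE u u.
have energy_gt0 : quad_exact k.+1 xb xs A i k.+1.*2 ->
    0 < (xr - xl) / (k.*2.+1)%:R - quad k.+1 xs A i (S k.+2 * S k) <->
    0 < Mstar_energy k.+1 xb xs A i (S k.+1).
  move=> exact2k; rewrite -(pmulr_rgt0 _ (ltr0Sn R k.*2)) Mstar_energy_legendre //.
  by rewrite pmulr_rgt0 ?ltr0Sn.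
split=> [[sym pos]|[exact2k cond2]].
  have exact2k : quad_exact k.+1 xb xs A i k.+1.*2.
    apply: quad_exact_double exactk _ => u w su sw.
    by have := sym u w su sw; rewrite !cellE mulrC => /addrI /oppr_inj.
  split=> //; rewrite energy_gt0 // -energyE; apply: pos; rewrite ?size_shifted_legendre //.
  by rewrite -size_poly_gt0 size_shifted_legendre.
split=> [u w su sw|u su u_neq0]; last first.
  by rewrite energyE; apply: Mstar_energy_gt0 => //; rewrite -energy_gt0.
by rewrite !cellE mulrC !Mstar_defectE // [w`__ * _]mulrC.
Qed.

End CellLegendre.

Section InnerProductOnCells.
Variables (R : realType) (k N : nat) (xs A : nat -> nat -> R).
Implicit Types (u w : {poly R}).

Definition on_cell i u : nat -> {poly R} := fun j => if j == i then u else 0.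

Lemma in_Vk_on_cell i u : (size u <= k.+1)%N -> in_Vk k N (on_cell i u).
Proof. by move=> su j _; rewrite /on_cell; case: eqP; rewrite ?size_poly0. Qed.

Lemma Mstar_cell0l i w : Mstar_cell k xs A i 0 w = 0.
Proof.
by rewrite /Mstar_cell big1 // => j _; rewrite -(scale0r 0) poly_intZ !mul0r mulr0.
Qed.

Lemma Mstar_formE (v w : nat -> {poly R}) :
  Mstar_form k N xs A v w = \sum_(i < N) Mstar_cell k xs A i (v i) (w i).
Proof. by []. Qed.

Lemma Mstar_form_on_cell i u w : (i < N)%N ->
  Mstar_form k N xs A (on_cell i u) (on_cell i w) = Mstar_cell k xs A i u w.
Proof.
move=> lt_iN; rewrite Mstar_formE (bigD1 (Ordinal lt_iN)) //= /on_cell eqxx big1 ?addr0 //.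
by move=> j /negbTE; rewrite -val_eqE /= => ->; apply: Mstar_cell0l.
Qed.

Lemma is_inner_product_on_VkE :
  is_inner_product_on_Vk k N xs A <-> forall i, (i < N)%N -> cell_inner_product k xs A i.
Proof.
split=> [[sym pos] i lt_iN|cell_ip].
  split=> [u w su sw|u su u_neq0]; rewrite -!Mstar_form_on_cell //.
    by apply: sym; apply: in_Vk_on_cell.
  by apply: pos; [apply: in_Vk_on_cell | exists i; rewrite /on_cell eqxx].
have cell_ge0 i (v : {poly R}) : (i < N)%N -> (size v <= k.+1)%N -> 0 <= Mstar_cell k xs A i v v.
  move=> lt_iN sv; have [->|v_neq0] := eqVneq v 0; first by rewrite Mstar_cell0l.
  by rewrite ltW // (cell_ip i lt_iN).2.
split=> [v w vV wV|v vV [i0 [lt_i0N v_neq0]]].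
  by apply: eq_bigr => -[i lt_iN] _; apply: (cell_ip i lt_iN).1; [apply: vV | apply: wV].
rewrite Mstar_formE (bigD1 (Ordinal lt_i0N)) //= ltr_pwDl ?(cell_ip i0 lt_i0N).2 ?vV //.
by rewrite sumr_ge0 // => -[i lt_iN] _; apply: cell_ge0 => //; apply: vV.
Qed.

End InnerProductOnCells.

Theorem theorem3p5 (R : realType) (k N : nat) (a b : R)
    (xb : nat -> R) (xs A : nat -> nat -> R) :
  (1 <= k)%N -> (0 < N)%N ->
  xb 0%N = a -> xb N = b ->
  (forall i, (i < N)%N -> xb i < xb i.+1) ->
  (forall i, (i < N)%N -> xs i 0%N = xb i /\ xs i k.+1 = xb i.+1) ->
  (forall i j, (i < N)%N -> (j <= k)%N -> xs i j < xs i j.+1) ->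
  (forall i (v : {poly R}), (i < N)%N -> (size v <= k)%N ->
      quad_err k xb xs A i v = 0) ->
  (is_inner_product_on_Vk k N xs A <->
   forall i, (i < N)%N ->
     (forall v : {poly R}, (size v <= k.*2)%N -> quad_err k xb xs A i v = 0) /\
     0 < (xb i.+1 - xb i) / (k.*2.-1)%:R
           - quad k xs A i (shifted_legendre (xb i) (xb i.+1) k.+1
                            * shifted_legendre (xb i) (xb i.+1) k.-1)).
Proof.
move=> k_gt0 _ _ _ lt_xb xs_ends _ exactk; rewrite is_inner_product_on_VkE.
split=> cell_ip i lt_iN; have [xs0 xsk] := xs_ends i lt_iN;
  by apply/(cell_inner_productP (lt_xb i lt_iN) k_gt0 xs0 xsk (exactk i ^~ lt_iN))/cell_ip.
Qed.
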